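(* Let $\{a,b\}$ be a $2$-element generating set of a finite abelian group $G$, and let $P$ and $P'$ be spanning quasi-paths in $\mathrm{Cay}(G;a,b)$ such that $\delta_b(P)=\delta_b(P')$. If $P$ is a hamiltonian path, then $P'$ is also a hamiltonian path.
   Context: The Cayley digraph $\mathrm{Cay}(G;a,b)$ has vertex set $G$ and an arc from $v$ to $v+s$ for all $v\in G$, $s\in\{a,b\}$; such an arc is an $s$-edge, and $\delta_b(P)$ denotes the number of $b$-edges in a subdigraph $P$. A spanning quasi-path in a digraph is a spanning subdigraph such that exactly one connected component is a directed path and all other components are directed cycles. A hamiltonian path is a directed path visiting every vertex exactly once. *)

From HB Require Import structures.
From mathcomp Require Import all_boot all_order all_algebra.
Set Implicit Arguments. Unset Strict Implicit. Unset Printing Implicit Defensive.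
Import GRing.Theory.
Local Open Scope ring_scope.

(* A finite abelian group G is a finZmodType (written additively).
   An arc of Cay(G;a,b) is encoded as (v, c) : G * bool, meaning the arc
   from v to v + (if c then b else a); c = true marks a b-edge.
   A spanning subdigraph is a set of arcs (all vertices are included). *)

Section Cay.
Variable G : finZmodType.
Variables a b : G.

Definition step (c : bool) : G := if c then b else a.

Definition arc_ends (e : G * bool) : G * G := (e.1, e.1 + step e.2).

Definition is_cay_step (xy : G * G) : bool :=
  (xy.2 == xy.1 + a) || (xy.2 == xy.1 + b).

Definition path_pairs (s : seq G) : seq (G * G) := zip s (behead s).
Definition cycle_pairs (s : seq G) : seq (G * G) := zip s (rot 1 s).

Definition spanning_quasi_path (E : {set G * bool}) : Prop :=
  exists (p : seq G) (cs : seq (seq G)),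
    [/\ p != [::],
        all (fun c => c != [::]) cs,
        perm_eq (p ++ flatten cs) (enum G),
        all is_cay_step (path_pairs p ++ flatten (map cycle_pairs cs)) &
        forall e, (e \in E) =
          (arc_ends e \in path_pairs p ++ flatten (map cycle_pairs cs))].

Definition hamiltonian_path (E : {set G * bool}) : Prop :=
  exists p : seq G,
    [/\ perm_eq p (enum G),
        all is_cay_step (path_pairs p) &
        forall e, (e \in E) = (arc_ends e \in path_pairs p)].

Definition delta_b (E : {set G * bool}) : nat := #|[set e in E | e.2]|.

End Cay.

(* {a, b} generates G (subgroup generated = all integer combinations). *)
Definition generates2 (G : finZmodType) (a b : G) : Prop :=
  forall x : G, exists i j : int, x = a *~ i + b *~ j.

From HB Require Import structures.
From mathcomp Require Import all_boot all_order all_algebra.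
From mathcomp Require Import fingroup cyclic.
Set Implicit Arguments. Unset Strict Implicit. Unset Printing Implicit Defensive.
Import GRing.Theory FinRing.Theory.
Local Open Scope ring_scope.

(* Let d := a - b and H := <[d]>, of order k. The arcs v -> v + a and
   v + d -> v + d + b have the same head, so in a spanning quasi-path with
   terminal vertex t, if v + d leaves by a b-edge then so does v (when neither
   is t). Going once around a coset of H, this forces all vertices of a coset
   other than t + H to leave by edges of the same kind, and the vertices
   t + l d (0 < l < k) to leave by b-edges exactly when l <= j. As G / H is
   cyclic, generated by a + H of some order m, the cosets are the levels
   t + r a + H (r < m); if c_r is the kind of the edges leaving level r, then
   delta_b = j + k (c_1 + ... + c_(m-1)). Hence delta_b determines j and the
   sum, and the level-wise translation v |-> v + (t' - t) + (B_r - B'_r) d,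
   where B_r = c_1 + ... + c_(r-1), sends t to t' and conjugates the successor
   maps of the two quasi-paths. It therefore maps a hamiltonian path onto a
   hamiltonian path. *)

Lemma bool_nonincreasing_le (f : nat -> bool) n :
  (forall i, (i < n)%N -> f i.+1 -> f i) -> forall i j, (i <= j <= n)%N -> f j -> f i.
Proof.
move=> f_step i j /andP[]; elim: j => [|j IH]; first by rewrite leqn0 => /eqP->.
rewrite leq_eqVlt => /predU1P[-> //|le_ij lt_jn] /f_step-/(_ lt_jn).
by apply: IH; rewrite // ltnW.
Qed.

Lemma sum_nat_bool_le (f : nat -> bool) m n : (\sum_(m <= i < n) f i <= n - m)%N.
Proof.
rewrite -[X in (_ <= X)%N]muln1 -sum_nat_const_nat.
by apply: leq_sum => i _; apply: leq_b1.
Qed.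

Lemma bool_nonincreasing_threshold (f : nat -> bool) n :
  (forall i, (i.+1 < n)%N -> f i.+1 -> f i) ->
  forall l, (l < n)%N -> f l = (l < \sum_(0 <= i < n) f i)%N.
Proof.
move=> f_step.
have f_anti i j : (i <= j)%N -> (j < n)%N -> f j -> f i.
  move=> le_ij lt_jn; apply: (bool_nonincreasing_le (n := n.-1)) => [i' |].
    by rewrite ltn_predRL; apply: f_step.
  by rewrite le_ij -ltnS (ltn_predK lt_jn).
move=> l lt_ln; rewrite (@big_cat_nat _ _ _ l) ?(ltnW lt_ln) //=.
case fl: (f l).
  rewrite big_nat_cond (eq_bigr (fun=> 1%N)) -?big_nat_cond; last first.
    by move=> i /andP[/andP[_ lt_il] _]; rewrite (f_anti i l) ?(ltnW lt_il).
  by rewrite sum_nat_const_nat muln1 subn0 big_ltn // fl addnA addn1 ltnS leq_addr.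
rewrite [X in (_ + X)%N]big1_seq ?addn0; last first.
  move=> i /andP[_]; rewrite mem_index_iota => /andP[le_li lt_in].
  by apply/eqP; rewrite eqb0; apply: contraFN fl; apply: f_anti.
by apply/esym/negbTE; rewrite -leqNgt -[X in (_ <= X)%N]subn0 sum_nat_bool_le.
Qed.

Lemma inj_in_of_uniq_map (T1 T2 : eqType) (f : T1 -> T2) (s : seq T1) :
  uniq (map f s) -> {in s &, injective f}.
Proof.
elim: s => //= x s IH /andP[fx_s /IH{}IH] u v; rewrite !inE.
case/predU1P=> [-> | us] /predU1P[-> | vs] // fuv; last exact: IH.
- by rewrite fuv map_f in fx_s.
- by rewrite -fuv map_f in fx_s.
Qed.

Section ZmodCycle.
Variable V : finZmodType.
Implicit Types (x y h : V) (A : {group V}).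

Lemma zmod_group0 A : 0 \in A.
Proof. exact: group1. Qed.

Lemma zmod_groupD A x y : x \in A -> y \in A -> x + y \in A.
Proof. by rewrite -zmodMgE; apply: groupM. Qed.

Lemma zmod_groupN A x : (- x \in A) = (x \in A).
Proof. by rewrite -zmodVgE groupV. Qed.

Lemma zmod_groupDr A x h : h \in A -> (x + h \in A) = (x \in A).
Proof. by rewrite -zmodMgE; apply: groupMr. Qed.

Lemma zmod_groupBr A x h : h \in A -> (x - h \in A) = (x \in A).
Proof. by rewrite -zmod_groupN => /zmod_groupDr. Qed.

Lemma zmod_groupMn A x n : x \in A -> x *+ n \in A.
Proof. by rewrite -zmodXgE; apply: groupX. Qed.

Lemma mulrn_cycle x n : x *+ n \in <[x]>%g.
Proof. by rewrite -zmodXgE mem_cycle. Qed.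

Lemma mulrn_order x : x *+ #[x]%g = 0.
Proof. by rewrite -zmodXgE expg_order. Qed.

Lemma eq_mulrn_mod_order x n1 n2 : (x *+ n1 == x *+ n2) = (n1 == n2 %[mod #[x]%g]).
Proof. by rewrite -!zmodXgE eq_expg_mod_order. Qed.

Lemma cycle_mulrnP x y :
  reflect (exists2 l, (l < #[x]%g)%N & y = x *+ l) (y \in <[x]>%g).
Proof.
apply: (iffP idP) => [|[l _ ->]]; last exact: mulrn_cycle.
case/cycleP=> l ->; exists (l %% #[x]%g)%N; first by rewrite ltn_pmod ?order_gt0.
by rewrite -!zmodXgE expg_mod_order.
Qed.

Lemma mulrz_mulrn x (z : int) : exists n, x *~ z = x *+ n.
Proof.
case: z => n; first by exists n.
exists (#[x]%g * n.+1 - n.+1)%N.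
rewrite NegzE mulrNz mulrnBr ?leq_pmull ?order_gt0 // mulrnA mulrn_order.
by rewrite mul0rn sub0r.
Qed.

End ZmodCycle.

Section Pairs.
Variable G : finZmodType.
Implicit Types (x : G) (q c : seq G).

Lemma map_fst_path_pairs x q : map fst (path_pairs (x :: q)) = belast x q.
Proof. by elim: q x => //= y q IH x; rewrite IH. Qed.

Lemma map_snd_path_pairs x q : map snd (path_pairs (x :: q)) = q.
Proof. exact: unzip2_zip. Qed.

Lemma map_fst_cycles_pairs cs : map fst (flatten (map (@cycle_pairs G) cs)) = flatten cs.
Proof.
elim: cs => //= c cs IH; rewrite map_cat IH; congr (_ ++ _).
by apply: unzip1_zip; rewrite size_rot.
Qed.

Lemma map_snd_cycles_pairs cs :
  map snd (flatten (map (@cycle_pairs G) cs)) = flatten (map (rot 1) cs).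
Proof.
elim: cs => //= c cs IH; rewrite map_cat IH; congr (_ ++ _).
by apply: unzip2_zip; rewrite size_rot.
Qed.

Lemma path_pairs_map (f : G -> G) s :
  path_pairs (map f s) = map (fun xy => (f xy.1, f xy.2)) (path_pairs s).
Proof.
by rewrite /path_pairs; case: s => //= x s; elim: s x => //= y s IH x; rewrite IH.
Qed.

End Pairs.

Section CayleyDigraph.
Variables (G : finZmodType) (a b : G).
Hypotheses (neq_ab : a != b) (gen : generates2 a b).
Local Notation d := (a - b).
Local Notation H := <[a - b]>%g.
Local Notation k := #[a - b]%g.

Lemma exists_level_period : exists r, (0 < r)%N && (a *+ r \in H).
Proof. by exists #[a]%g; rewrite order_gt0 mulrn_order zmod_group0. Qed.

(* The order of a + H in G / H. *)
Definition nlevels := ex_minn exists_level_period.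

Lemma nlevels_gt0 : (0 < nlevels)%N.
Proof. by rewrite /nlevels; case: ex_minnP => r /andP[]. Qed.

Lemma mulrn_nlevels : a *+ nlevels \in H.
Proof. by rewrite /nlevels; case: ex_minnP => r /andP[]. Qed.

Lemma mulrn_modn_nlevels n : a *+ n - a *+ (n %% nlevels) \in H.
Proof.
rewrite {1}(divn_eq n nlevels) mulrnDr addrK mulnC mulrnA.
exact: zmod_groupMn mulrn_nlevels.
Qed.

Lemma eq_level_mulrn r1 r2 : (r1 < nlevels)%N -> (r2 < nlevels)%N ->
  a *+ r1 - a *+ r2 \in H -> r1 = r2.
Proof.
wlog le_r21 : r1 r2 / (r2 <= r1)%N.
  move=> W lt_r1 lt_r2 Hr; case: (leqP r2 r1) => [|/ltnW] le; first exact: W.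
  by apply/esym/W; rewrite // -zmod_groupN opprB.
move=> lt_r1 _; rewrite -mulrnBr // => Hr; apply/eqP; rewrite eqn_leq le_r21 andbT.
rewrite leqNgt -subn_gt0; apply/negP => pos_r; move: lt_r1; apply/negP; rewrite -leqNgt.
apply: leq_trans (leq_subr r2 r1); rewrite /nlevels; case: ex_minnP => r _; apply.
by rewrite pos_r.
Qed.

Lemma exists_level x : exists r, x - a *+ r \in H.
Proof.
have [i [j ->]] := gen x; have [r1 ->] := mulrz_mulrn a i; have [r2 ->] := mulrz_mulrn b j.
exists (r1 + r2)%N.
by rewrite mulrnDr opprD addrACA subrr add0r -opprB -mulrnBl zmod_groupN mulrn_cycle.
Qed.

(* The index r < nlevels of the coset a *+ r + H containing x. *)
Definition level x := (xchoose (exists_level x) %% nlevels)%N.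

Lemma level_lt x : (level x < nlevels)%N.
Proof. by rewrite ltn_pmod ?nlevels_gt0. Qed.

Lemma level_mem x : x - a *+ level x \in H.
Proof.
have := xchooseP (exists_level x); rewrite /level; move: (xchoose _) => n.
by rewrite -(zmod_groupDr _ (mulrn_modn_nlevels n)) subrKA.
Qed.

Lemma level_uniq x r : (r < nlevels)%N -> x - a *+ r \in H -> level x = r.
Proof.
move=> lt_r Hr; apply: eq_level_mulrn (level_lt x) lt_r _.
have -> : a *+ level x - a *+ r = (x - a *+ r) - (x - a *+ level x).
  by rewrite [RHS]addrC opprB subrKA.
by rewrite zmod_groupBr ?level_mem.
Qed.

Lemma levelDr x h : h \in H -> level (x + h) = level x.
Proof.
by move=> Hh; apply: level_uniq (level_lt x) _; rewrite addrAC zmod_groupDr ?level_mem.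
Qed.

Lemma level_mulrn n : level (a *+ n) = (n %% nlevels)%N.
Proof. by apply: level_uniq (mulrn_modn_nlevels n); rewrite ltn_pmod ?nlevels_gt0. Qed.

Lemma levelDa x : level (x + a) = ((level x).+1 %% nlevels)%N.
Proof.
apply: level_uniq; first by rewrite ltn_pmod ?nlevels_gt0.
have -> : x + a - a *+ ((level x).+1 %% nlevels) =
    (x - a *+ level x) + (a *+ (level x).+1 - a *+ ((level x).+1 %% nlevels)).
  by rewrite mulrSr !addrA subrK.
by rewrite zmod_groupD ?level_mem ?mulrn_modn_nlevels.
Qed.

Lemma level_eq0 x : (level x == 0%N) = (x \in H).
Proof.
apply/eqP/idP => [L0|Hx]; first by have := level_mem x; rewrite L0 subr0.
by apply: level_uniq; rewrite ?nlevels_gt0 ?subr0.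
Qed.

Lemma mulrn_notin_cycle r : (0 < r < nlevels)%N -> a *+ r \notin H.
Proof. by case/andP=> r_gt0 lt_r; rewrite -level_eq0 level_mulrn modn_small // -lt0n. Qed.

Lemma sum_levels (F : G -> nat) :
  (\sum_x F x = \sum_(0 <= r < nlevels) \sum_(i < k) F (a *+ r + d *+ i)%R)%N.
Proof.
pose h (p : 'I_nlevels * 'I_#[d]%g) := a *+ p.1 + d *+ p.2.
have h_inj : injective h.
  move=> [r1 i1] [r2 i2]; rewrite /h /= => eq_h.
  have eq_r : r1 = r2.
    apply: val_inj => /=; rewrite -(modn_small (ltn_ord r1)) -(modn_small (ltn_ord r2)).
    by rewrite -!level_mulrn -(levelDr _ (mulrn_cycle d i1)) eq_h levelDr ?mulrn_cycle.
  move: eq_h; rewrite eq_r => /addrI/eqP; rewrite eq_mulrn_mod_order !modn_small //.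
  by move/eqP/val_inj->.
have h_onto : h @: setT = setT.
  apply/setP => x; rewrite !inE; apply/imsetP.
  have [i lt_i Hi] := cycle_mulrnP _ _ (level_mem x).
  by exists (Ordinal (level_lt x), Ordinal lt_i); rewrite ?inE // /h /= -Hi addrC subrK.
rewrite big_mkord pair_bigA; transitivity (\sum_(x in h @: setT) F x)%N.
  by rewrite h_onto; apply: eq_bigl => x; rewrite inE.
by rewrite big_imset /=; [apply: eq_bigl => p; rewrite inE | exact: in2W].
Qed.

Lemma step_inj : injective (step a b).
Proof. by case=> -[] //= eq_ab; move: neq_ab; rewrite eq_ab eqxx. Qed.

Lemma arc_ends_inj : injective (arc_ends a b).
Proof. by move=> [v c] [w c'] [<- /addrI/step_inj<-]. Qed.

Lemma is_cay_stepP x y : reflect (exists c, y = x + step a b c) (is_cay_step a b (x, y)).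
Proof.
apply: (iffP orP) => /= [[] /eqP->|[[] ->]];
  [by exists false | by exists true | by right | by left].
Qed.

(* t is the end of the path component, the only vertex without an out-arc. *)
Definition quasi_path_arcs (E : {set G * bool}) (t : G) : Prop :=
  [/\ forall c, (t, c) \notin E,
      forall v, v != t -> exists c, (v, c) \in E,
      {in E &, injective fst} &
      {in E &, injective (fun e => (arc_ends a b e).2)}].

Lemma spanning_quasi_path_arcs E :
  spanning_quasi_path a b E -> exists t, quasi_path_arcs E t.
Proof.
case=> -[|x q] [cs [//= _ _ perm_V all_steps memE]].
set Pairs := _ ++ _ in all_steps memE.
have perm_tails : perm_eq (last x q :: map fst Pairs) (enum G).
  rewrite -(permPr perm_V) map_cat map_fst_path_pairs map_fst_cycles_pairs.
  rewrite -[x :: _]cat_cons [x :: q]lastI cat_rcons perm_sym.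
  by rewrite (perm_catCA (belast x q) [:: last x q]).
have perm_heads : perm_eq (x :: map snd Pairs) (enum G).
  rewrite -(permPr perm_V) map_cat map_snd_path_pairs map_snd_cycles_pairs.
  rewrite perm_cons perm_cat2l.
  elim: {perm_V all_steps memE perm_tails Pairs}cs => //= c cs.
  by apply: perm_cat; rewrite perm_rot.
have [tail_Pairs uniq_tails] : last x q \notin map fst Pairs /\ uniq (map fst Pairs).
  by apply/andP; rewrite -[_ && _]/(uniq (_ :: _)) (perm_uniq perm_tails) enum_uniq.
have uniq_heads : uniq (map snd Pairs).
  by have := enum_uniq G; rewrite -(perm_uniq perm_heads) => /andP[].
exists (last x q); split.
- by move=> c; rewrite memE; apply: contra tail_Pairs => /(map_f fst).
- move=> v vt; have : v \in map fst Pairs.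
    by have := mem_enum G v; rewrite -(perm_mem perm_tails) inE (negbTE vt).
  case/mapP=> -[w y] Pwy /= ->; have /is_cay_stepP[c eq_y] := allP all_steps _ Pwy.
  by exists c; rewrite memE /arc_ends /= -eq_y.
- move=> e e'; rewrite !memE => Pe Pe' eq1; apply: arc_ends_inj.
  exact: inj_in_of_uniq_map uniq_tails _ _ Pe Pe' eq1.
- move=> e e'; rewrite !memE => Pe Pe' eq2; apply: arc_ends_inj.
  exact: inj_in_of_uniq_map uniq_heads _ _ Pe Pe' eq2.
Qed.

Section Colouring.
Variables (E : {set G * bool}) (t : G).
Hypothesis qpE : quasi_path_arcs E t.

Definition bcol v := (v, true) \in E.
Definition succ v := v + step a b (bcol v).

Lemma mem_arcs v c : ((v, c) \in E) = (v != t) && (c == bcol v).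
Proof.
case: qpE => no_out_t out_v inj_tail _; have [->|vt] := eqVneq v t; first exact/negbTE.
rewrite /bcol; case: c => /=; first by case: ((v, true) \in E).
case Evt: ((v, true) \in E) => /=.
  by apply/negP => /(inj_tail _ _ Evt)/(_ erefl).
by have [[] Evc] := out_v v vt; rewrite // Evc in Evt.
Qed.

Lemma bcol_t : bcol t = false.
Proof. by rewrite /bcol mem_arcs eqxx. Qed.

Lemma bcol_addd v : v != t -> v + d != t -> bcol (v + d) -> bcol v.
Proof.
move=> vt vdt bcol_vd; apply/negPn/negP => nbcol_v.
have Ev : (v, false) \in E by rewrite mem_arcs vt eq_sym (negbTE nbcol_v).
case: qpE => _ _ _ /(_ _ _ Ev bcol_vd) /=.
by rewrite /step -[v + d + b]addrA subrK => /(_ erefl) [].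
Qed.

Lemma off_coset_neq v h : v - t \notin H -> h \in H -> v + h != t.
Proof.
by move=> vtH Hh; apply: contraNneq vtH => <-; rewrite opprD addrA subrr add0r zmod_groupN.
Qed.

Lemma bcol_cosetD v h : v - t \notin H -> h \in H -> bcol (v + h) = bcol v.
Proof.
move=> vtH /cycle_mulrnP[l lt_lk ->]; pose f i := bcol (v + d *+ i).
have f_step i : (i < k)%N -> f i.+1 -> f i.
  move=> _; rewrite /f mulrSr addrA; apply: bcol_addd.
    exact: off_coset_neq (mulrn_cycle _ _).
  by rewrite -addrA -mulrSr off_coset_neq ?mulrn_cycle.
have f0 : f 0%N = bcol v by rewrite /f mulr0n addr0.
rewrite -f0 -/(f l); apply/idP/idP.
  by apply: (bool_nonincreasing_le f_step); rewrite /= ltnW.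
have fk : f k = f 0%N by rewrite /f mulrn_order mulr0n.
by rewrite -fk; apply: (bool_nonincreasing_le f_step); rewrite leqnn ltnW.
Qed.

Lemma base_neq l : (0 < l < k)%N -> t + d *+ l != t.
Proof.
case/andP=> l_gt0 lt_lk; rewrite -[X in _ != X]addr0 (inj_eq (addrI t)) -(mulr0n d).
by rewrite eq_mulrn_mod_order mod0n modn_small // -lt0n.
Qed.

Definition base_count := (\sum_(0 <= i < k.-1) bcol (t + d *+ i.+1)%R)%N.

Lemma bcol_base l : (0 < l < k)%N -> bcol (t + d *+ l) = (l <= base_count)%N.
Proof.
case: l => // l /andP[_ lt_lk]; rewrite /base_count.
apply: (bool_nonincreasing_threshold (f := fun i => bcol (t + d *+ i.+1))); last first.
  by rewrite ltn_predRL.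
move=> i; rewrite ltn_predRL => lt_i2k; rewrite mulrSr addrA; apply: bcol_addd.
  by apply: base_neq; rewrite ltn0Sn ltnW.
by rewrite -addrA -mulrSr base_neq.
Qed.

Definition level_bcol r := bcol (t + a *+ r).

Lemma bcol_level v : v - t \notin H -> bcol v = level_bcol (level (v - t)).
Proof.
move=> vtH; set r := level (v - t).
have arH : t + a *+ r - t \notin H.
  by rewrite addrAC subrr add0r mulrn_notin_cycle // level_lt andbT lt0n level_eq0.
have -> : v = t + a *+ r + (v - t - a *+ r).
  by rewrite -addrA (addrC (a *+ r)) subrK addrC subrK.
exact: bcol_cosetD arH (level_mem _).
Qed.

Definition bsum r := (\sum_(1 <= q < r) level_bcol q)%N.

Lemma delta_b_sum : delta_b E = (\sum_v bcol v)%N.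
Proof.
rewrite /delta_b; have -> : [set e in E | e.2] = (fun v => (v, true)) @: [set v | bcol v].
  apply/setP => -[v c]; rewrite !inE; apply/andP/imsetP => [[Evc /= c_true]|[w]].
    by case: c Evc c_true => // Evc _; exists v; rewrite ?inE.
  by rewrite inE => bw [-> ->].
rewrite card_imset; last by move=> v w [].
by rewrite -sum1_card big_mkcond; apply: eq_bigr => v _; rewrite inE; case: bcol.
Qed.

Lemma sum_base_coset : (\sum_(i < k) bcol (t + d *+ i)%R)%N = base_count.
Proof.
rewrite /base_count big_mkord; case: #[d]%g (order_gt0 d) => // n _.
by rewrite big_ord_recl /= mulr0n addr0 bcol_t.
Qed.

Lemma sum_level_coset r : (0 < r < nlevels)%N ->
  (\sum_(i < k) bcol (t + (a *+ r + d *+ i))%R)%N = (k * level_bcol r)%N.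
Proof.
move=> r_range.
rewrite (eq_bigr (fun=> nat_of_bool (level_bcol r))) ?sum_nat_const ?card_ord //.
move=> i _; rewrite addrA bcol_cosetD ?mulrn_cycle //.
by rewrite addrAC subrr add0r mulrn_notin_cycle.
Qed.

Lemma delta_bE : delta_b E = (base_count + k * bsum nlevels)%N.
Proof.
rewrite delta_b_sum (reindex_inj (addrI t)) /= (sum_levels (fun x => bcol (t + x))).
rewrite big_ltn ?nlevels_gt0 //=; under eq_bigr => i _ do rewrite mulr0n add0r.
rewrite sum_base_coset.
by rewrite /bsum big_distrr /=; congr (_ + _)%N; apply: eq_big_nat => r /sum_level_coset.
Qed.

Lemma base_count_lt : (base_count < k)%N.
Proof.
by apply: leq_ltn_trans (sum_nat_bool_le _ 0 k.-1) _; rewrite subn0 ltn_predL order_gt0.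
Qed.

Lemma base_countE : base_count = (delta_b E %% k)%N.
Proof. by rewrite delta_bE addnC mulnC modnMDl modn_small // base_count_lt. Qed.

Lemma bsumE : bsum nlevels = (delta_b E %/ k)%N.
Proof.
by rewrite delta_bE addnC mulnC divnMDl ?order_gt0 // divn_small ?base_count_lt ?addn0.
Qed.

Lemma hamiltonian_pathP : hamiltonian_path a b E <->
  exists2 p : seq G, perm_eq p (enum G) &
    forall x y, ((x, y) \in path_pairs p) = (x != t) && (y == succ x).
Proof.
split=> [[p [perm_p steps_p memE]]|[p perm_p pairs_p]].
  exists p => // x y; apply/idP/andP => [Pxy|[xt /eqP->]].
    have /is_cay_stepP[c eq_y] := allP steps_p _ Pxy.
    have : (x, c) \in E by rewrite memE /arc_ends /= -eq_y.
    by rewrite mem_arcs => /andP[-> /eqP c_eq]; rewrite eq_y c_eq.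
  by rewrite -[(x, _)]/(arc_ends a b (x, bcol x)) -memE mem_arcs xt eqxx.
exists p; split=> //.
  apply/allP => -[x y]; rewrite pairs_p => /andP[_ /eqP->].
  by apply/is_cay_stepP; exists (bcol x).
move=> [v c]; rewrite mem_arcs pairs_p /succ /arc_ends /=.
by rewrite (inj_eq (addrI v)) (inj_eq step_inj).
Qed.

End Colouring.

Lemma stepE c : step a b c = a - d *+ c.
Proof. by case: c; rewrite /step ?subr0 // opprB addrC subrK. Qed.

Section Transfer.
Variables (E E' : {set G * bool}) (t t' : G).
Hypotheses (qpE : quasi_path_arcs E t) (qpE' : quasi_path_arcs E' t').
Hypothesis eq_delta : delta_b E = delta_b E'.

Definition shift r := d *+ bsum E t r - d *+ bsum E' t' r.
Definition transfer v := t' + (v - t) + shift (level (v - t)).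

Lemma shift_mem r : shift r \in H.
Proof. by rewrite zmod_groupBr mulrn_cycle. Qed.

Lemma shift_le1 r : (r <= 1)%N -> shift r = 0.
Proof. by move=> le_r1; rewrite /shift /bsum !big_geq // subrr. Qed.

Lemma shift_succ r : (0 < r < nlevels)%N ->
  shift (r.+1 %% nlevels) + d *+ level_bcol E' t' r = shift r + d *+ level_bcol E t r.
Proof.
case/andP=> r_gt0 lt_r; case: (ltnP r.+1 nlevels) => [lt_r1|le_r1].
  rewrite modn_small // /shift /bsum !big_nat_recr //=.
  by rewrite !mulrnDr opprD addrA subrK addrAC.
have r1_eq : r.+1 = nlevels by apply/eqP; rewrite eqn_leq lt_r.
have eq_bsum : bsum E t r.+1 = bsum E' t' r.+1.
  by rewrite r1_eq (bsumE qpE) (bsumE qpE') eq_delta.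
rewrite /bsum !big_nat_recr //= in eq_bsum.
rewrite r1_eq modnn shift_le1 // add0r /shift addrAC -mulrnDr eq_bsum mulrnDr.
by rewrite [d *+ bsum E' t' r + _]addrC addrK.
Qed.

Lemma transfer_sub v : transfer v - t' = v - t + shift (level (v - t)).
Proof. by rewrite /transfer -[t' + _ + _]addrA addrC addrK. Qed.

Lemma level_transfer v : level (transfer v - t') = level (v - t).
Proof. by rewrite transfer_sub levelDr ?shift_mem. Qed.

Lemma transfer_inj : injective transfer.
Proof.
move=> v w eq_vw.
have eq_l : level (v - t) = level (w - t) by rewrite -!level_transfer eq_vw.
by move: (congr1 (fun x => x - t') eq_vw); rewrite !transfer_sub eq_l => /addIr/addIr.
Qed.

Lemma transfer_t : transfer t = t'.
Proof.
have /eqP level0 : level (t - t) == 0%N by rewrite level_eq0 subrr zmod_group0.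
by rewrite /transfer level0 shift_le1 // subrr !addr0.
Qed.

Lemma transfer_succ_base l : (0 < l < k)%N ->
  transfer (succ E (t + d *+ l)) = succ E' (transfer (t + d *+ l)).
Proof.
move=> l_range; set v := t + d *+ l.
have vt : v - t = d *+ l by rewrite addrAC subrr add0r.
have tr_v : transfer v = t' + d *+ l.
  have level_vt : level (v - t) = 0%N by apply/eqP; rewrite level_eq0 vt mulrn_cycle.
  by rewrite /transfer level_vt vt shift_le1 // addr0.
have eq_bcol : bcol E' (t' + d *+ l) = bcol E v.
  rewrite (bcol_base qpE') // (bcol_base qpE) //.
  by rewrite (base_countE qpE) (base_countE qpE') eq_delta.
have succ_vt : succ E v - t = d *+ l + step a b (bcol E v) by rewrite addrAC vt.
have level_succ : (level (succ E v - t) <= 1)%N.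
  rewrite succ_vt addrC stepE -addrA levelDr.
    by rewrite -[a]mulr1n level_mulrn leq_mod.
  by rewrite zmod_groupD ?zmod_groupN ?mulrn_cycle.
by rewrite tr_v /transfer (shift_le1 level_succ) addr0 succ_vt /succ eq_bcol addrA.
Qed.

Lemma transfer_succ_level v : v - t \notin H -> transfer (succ E v) = succ E' (transfer v).
Proof.
move=> vtH; set r := level (v - t).
have r_range : (0 < r < nlevels)%N by rewrite lt0n level_eq0 vtH level_lt.
have trH : transfer v - t' \notin H by rewrite -level_eq0 level_transfer level_eq0.
set c := level_bcol E t r; set c' := level_bcol E' t' r.
have succ_vt : succ E v - t = v - t + a - d *+ c.
  by rewrite /succ (bcol_level qpE vtH) stepE addrAC addrA.
have level_succ : level (succ E v - t) = (r.+1 %% nlevels)%N.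
  by rewrite succ_vt levelDr ?zmod_groupN ?mulrn_cycle // levelDa.
have shift_r1 : shift (r.+1 %% nlevels) = shift r + d *+ c - d *+ c'.
  by rewrite -(shift_succ r_range) addrK.
rewrite {2}/succ (bcol_level qpE' trH) level_transfer -/r -/c' stepE.
rewrite /transfer level_succ succ_vt shift_r1 -/r.
move: (v - t) (shift r) (d *+ c) (d *+ c') => X S C C'.
by rewrite !addrA; congr (_ - _); rewrite addrAC subrK addrAC.
Qed.

Lemma transfer_succ v : v != t -> transfer (succ E v) = succ E' (transfer v).
Proof.
move=> vt; have [/cycle_mulrnP[l lt_lk eq_vt]|] := boolP (v - t \in H); last first.
  exact: transfer_succ_level.
have -> : v = t + d *+ l by rewrite -eq_vt addrC subrK.
apply: transfer_succ_base; rewrite lt_lk andbT lt0n; apply: contra_neq vt => l0.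
by apply/eqP; rewrite -subr_eq0 eq_vt l0 mulr0n.
Qed.

Lemma transfer_surj y : exists x, y = transfer x.
Proof. by have [inv _ invK] := injF_bij transfer_inj; exists (inv y); rewrite invK. Qed.

Lemma hamiltonian_path_transfer : hamiltonian_path a b E -> hamiltonian_path a b E'.
Proof.
case/(hamiltonian_pathP qpE) => p perm_p pairs_p; apply/(hamiltonian_pathP qpE').
exists (map transfer p).
  apply: uniq_perm.
  - by rewrite (map_inj_uniq transfer_inj) (perm_uniq perm_p) enum_uniq.
  - exact: enum_uniq.
  - move=> y; have [x ->] := transfer_surj y.
    by rewrite (mem_map (T1 := G) (T2 := G) transfer_inj) (perm_mem perm_p) !mem_enum.
pose f xy := (transfer xy.1, transfer xy.2).
have f_inj : injective f by move=> [? ?] [? ?] [/transfer_inj-> /transfer_inj->].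
move=> x' y'; have [x ->] := transfer_surj x'; have [y ->] := transfer_surj y'.
rewrite path_pairs_map -/f (_ : (transfer x, transfer y) = f (x, y)) // mem_map // pairs_p.
rewrite -transfer_t (inj_eq transfer_inj); have [//|xt] := eqVneq x t.
by rewrite -transfer_succ // (inj_eq transfer_inj).
Qed.

End Transfer.

End CayleyDigraph.

Theorem mainTheorem18 (G : finZmodType) (a b : G) (E E' : {set G * bool}) :
  a != b -> generates2 a b ->
  spanning_quasi_path a b E -> spanning_quasi_path a b E' ->
  delta_b E = delta_b E' ->
  hamiltonian_path a b E -> hamiltonian_path a b E'.
Proof.
move=> neq_ab gen /(spanning_quasi_path_arcs neq_ab) [t qpE].
move=> /(spanning_quasi_path_arcs neq_ab) [t' qpE'] eq_delta.
exact: (hamiltonian_path_transfer neq_ab gen qpE qpE' eq_delta).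
Qed.
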